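(* With $v_1=(1,0,0)$, $v_2=(0,1,0)$, $v_3=(-1,-1,0)$, $v_4=(0,0,1)$, $v_5=(1,1,-1)$, $\Delta=\mathrm{conv}\{v_1,\dots,v_5\}\subset\mathbb R^3$ (a reflexive polytope) and $f(t)=1-a_1t_1-a_2t_2-a_3t_1^{-1}t_2^{-1}-a_4t_3-a_5t_1t_2t_3^{-1}$, the toric residue $$R_{x_1x_2x_4}(a)=-\mathrm{Res}_f\big(t_0^3\,(a_1t_1)(a_2t_2)(a_4t_3)\big)$$ equals $$\frac{a_1^4a_2^4a_3^4a_4^3a_5^3-27a_1^5a_2^5a_3^5a_4^3a_5^3-81a_1^4a_2^4a_3^5a_4^4a_5^4}{E_A(f)},$$ where $E_A(f)$ is the principal $A$-determinant $a_1^4a_2^4a_3^4a_4^3a_5^3-54a_1^5a_2^5a_3^5a_4^3a_5^3-a_1^3a_2^3a_3^4a_4^4a_5^4+729a_1^6a_2^6a_3^6a_4^3a_5^3+54a_1^3a_2^3a_3^5a_4^5a_5^5-2187a_1^5a_2^5a_3^6a_4^4a_5^4+2187a_1^4a_2^4a_3^6a_4^5a_5^5-729a_1^3a_2^3a_3^6a_4^6a_5^6$.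
   Context: Let $M\cong\mathbb Z^d$ and $\Delta\subset M_{\mathbb R}$ a reflexive $d$-dimensional lattice polytope ($0$ interior, polar polytope a lattice polytope). $S_\Delta=\bigoplus_kS^k_\Delta\subset\mathbb C[t_0,t^{\pm1}]$ with $S^k_\Delta$ spanned by $t_0^kt^m$, $m\in k\Delta\cap M$. For a Laurent polynomial $f$ with support in $\Delta$, let $f_i=t_i\partial f/\partial t_i$, $F_0=t_0f$, $F_i=t_0f_i$; $f$ is $\Delta$-regular if $F_0,\dots,F_d$ is a regular sequence in $S_\Delta$. Let $H'_f=t_0^d\det M_f$ where $M_f$ is the $(d+1)\times(d+1)$ matrix with first row $(f,f_1,\dots,f_d)$, first column $(f,f_1,\dots,f_d)^T$ and $(i,j)$ entry $t_i\partial f_j/\partial t_i$ for $1\le i,j\le d$. The toric residue $\mathrm{Res}_f:S^d_\Delta\to\mathbb C$ is the unique linear map vanishing on $\sum_iF_iS^{d-1}_\Delta$ with $\mathrm{Res}_f(H'_f)=\mathrm{Vol}(\Delta)$ ($d!$ times Euclidean volume); as a function of the coefficients of $f$ it is rational. *)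

From mathcomp Require Import all_boot all_order all_algebra all_fingroup.
Set Implicit Arguments. Unset Strict Implicit. Unset Printing Implicit Defensive.
Import Order.TTheory GRing.Theory Num.Theory.
Local Open Scope ring_scope.

Definition pt := (int * int * int)%type.
Definition ptsub (m n : pt) : pt := (m.1.1 - n.1.1, m.1.2 - n.1.2, m.2 - n.2).

(* vertices v1..v5 (indexed 0..4) *)
Definition vtx (i : 'I_5) : pt :=
  match val i with
  | 0 => (1, 0, 0) | 1 => (0, 1, 0) | 2 => (-1, -1, 0) | 3 => (0, 0, 1)
  | _ => (1, 1, -1) end.

(* m lies in k*Delta = k * conv{v1..v5} (convex combination with rational
   coefficients; Delta is a rational polytope) *)
Definition in_kDelta (k : nat) (m : pt) : Prop :=
  exists lam : 'I_5 -> rat,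
    (forall i, 0 <= lam i) /\ \sum_i lam i = k%:R /\
    \sum_i lam i * ((vtx i).1.1)%:~R = (m.1.1)%:~R /\
    \sum_i lam i * ((vtx i).1.2)%:~R = (m.1.2)%:~R /\
    \sum_i lam i * ((vtx i).2)%:~R = (m.2)%:~R.

(* normalized volume Vol(Delta) = 3! * Euclidean volume; computed by the
   facet decomposition: quadrilateral facet x+y+z=1 (normalized area 2) and
   four unimodular triangles, total 6. *)
Definition VolDelta : nat := 6.

Section LaurentS.
Variable C : numClosedFieldType.

(* A Laurent polynomial in t1,t2,t3, given by its coefficient function.
   An element t0^k * g of S^k_Delta is represented by g with [inS k g]. *)
Definition lpoly := pt -> C.

Definition inS (k : nat) (g : lpoly) : Prop :=
  forall m, g m != 0 -> in_kDelta k m.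

Definition mono (m0 : pt) (c : C) : lpoly := fun m => if m == m0 then c else 0.
Definition lpadd (g h : lpoly) : lpoly := fun m => g m + h m.
Definition lpscale (c : C) (g : lpoly) : lpoly := fun m => c * g m.
Definition lpzero : lpoly := fun _ => 0.

Definition boxsum (n : nat) (F : pt -> C) : C :=
  \sum_(i < (2 * n).+1) \sum_(j < (2 * n).+1) \sum_(l < (2 * n).+1)
     F (i%:Z - n%:Z, j%:Z - n%:Z, l%:Z - n%:Z).

(* product g*h; exact whenever the support of g lies in [-n,n]^3
   (e.g. n = 1 for g of support in Delta, which lies in [-1,1]^3) *)
Definition lpmul (n : nat) (g h : lpoly) : lpoly :=
  fun m => boxsum n (fun m1 => g m1 * h (ptsub m m1)).

(* product of a list of elements of degree 1 *)
Fixpoint lprod (gs : seq lpoly) : lpoly :=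
  if gs is g :: gs' then lpmul 1 g (lprod gs') else mono (0, 0, 0) 1.

(* weights for theta_i = t_i d/dt_i (i = 1,2,3); theta_0 := identity *)
Definition wt (i : 'I_4) (m : pt) : int :=
  match val i with 0 => 1 | 1 => m.1.1 | 2 => m.1.2 | _ => m.2 end.
Definition theta (i : 'I_4) (g : lpoly) : lpoly := fun m => (wt i m)%:~R * g m.

Definition fpoly (a : 'I_5 -> C) : lpoly :=
  fun m => (if m == (0, 0, 0) then 1 else 0)
           - \sum_(i < 5) (if m == vtx i then a i else 0).

(* F_0 = t0 f, F_i = t0 f_i  (t0 = degree bookkeeping) *)
Definition Fi (a : 'I_5 -> C) (i : 'I_4) : lpoly := theta i (fpoly a).

Definition Mf (a : 'I_5 -> C) (i j : 'I_4) : lpoly := theta i (theta j (fpoly a)).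

Definition detlp (M : 'I_4 -> 'I_4 -> lpoly) : lpoly :=
  fun m => \sum_(s : 'S_4) (-1) ^+ s * lprod [seq M i (s i) | i <- enum 'I_4] m.

Definition Hprime (a : 'I_5 -> C) : lpoly := detlp (Mf a).

Definition inIdeal (a : 'I_5 -> C) (j : nat) (n : nat) (g : lpoly) : Prop :=
  if n is n'.+1 then
    exists hs : 'I_4 -> lpoly, (forall i, inS n' (hs i)) /\
      forall m, g m = \sum_(i < 4 | (i < j)%N) lpmul 1 (Fi a i) (hs i) m
  else forall m, g m = 0.

(* F_0,...,F_3 is a regular sequence in the graded ring S_Delta
   (checked on homogeneous elements, which suffices as the F_i are homogeneous;
   properness of the ideal is automatic by the grading) *)
Definition Delta_regular (a : 'I_5 -> C) : Prop :=
  forall (j : 'I_4) (k : nat) (g : lpoly), inS k g ->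
    inIdeal a j k.+1 (lpmul 1 (Fi a j) g) -> inIdeal a j k g.

Definition is_toric_residue (a : 'I_5 -> C) (Res : lpoly -> C) : Prop :=
  [/\ (forall g h, (forall m, g m = h m) -> Res g = Res h),
      (forall (c : C) g h, inS 3 g -> inS 3 h ->
         Res (lpadd (lpscale c g) h) = c * Res g + Res h),
      (forall (i : 'I_4) h, inS 2 h -> Res (lpmul 1 (Fi a i) h) = 0)
    & Res (Hprime a) = VolDelta%:R].

Definition EA (a : 'I_5 -> C) : C :=
  let a1 := a (inord 0) in let a2 := a (inord 1) in let a3 := a (inord 2) in
  let a4 := a (inord 3) in let a5 := a (inord 4) in
  a1^+4*a2^+4*a3^+4*a4^+3*a5^+3 - 54*a1^+5*a2^+5*a3^+5*a4^+3*a5^+3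
  - a1^+3*a2^+3*a3^+4*a4^+4*a5^+4 + 729*a1^+6*a2^+6*a3^+6*a4^+3*a5^+3
  + 54*a1^+3*a2^+3*a3^+5*a4^+5*a5^+5 - 2187*a1^+5*a2^+5*a3^+6*a4^+4*a5^+4
  + 2187*a1^+4*a2^+4*a3^+6*a4^+5*a5^+5 - 729*a1^+3*a2^+3*a3^+6*a4^+6*a5^+6.

Definition Rnum (a : 'I_5 -> C) : C :=
  let a1 := a (inord 0) in let a2 := a (inord 1) in let a3 := a (inord 2) in
  let a4 := a (inord 3) in let a5 := a (inord 4) in
  a1^+4*a2^+4*a3^+4*a4^+3*a5^+3 - 27*a1^+5*a2^+5*a3^+5*a4^+3*a5^+3
  - 81*a1^+4*a2^+4*a3^+5*a4^+4*a5^+4.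

End LaurentS.

From mathcomp Require Import all_boot all_order all_algebra all_fingroup.
From mathcomp Require Import ssrZ ring.
From Stdlib Require Import BinInt.
Set Implicit Arguments.
Unset Strict Implicit.
Unset Printing Implicit Defensive.
Import GRing.Theory Num.Theory.
Local Open Scope ring_scope.

(* The toric residue is pinned down on S^3_Delta by its linearity, its vanishing on
   F_0 S^2 + ... + F_3 S^2 and its value Vol(Delta) = 6 on H'_f.  We exhibit an
   explicit identity in S^3_Delta
     D * (a1 a2 a4 t1 t2 t3) + N * H'_f = F_0 h_0 + F_1 h_1 + F_2 h_2 + F_3 h_3
   with h_k in S^2_Delta, D = 6 a5 (a1 a2 - a4 a5)^2 Q and
   N = (a1 a2 - a4 a5) a1 a2 a5 (1 - 27 a1 a2 a3 - 81 a3 a4 a5), where Q is the factor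
   of E_A(f) = a1^3 a2^3 a3^4 a4^3 a5^3 (a1 a2 - a4 a5) Q.  Applying Res gives
   D * Res(a1 a2 a4 t1 t2 t3) + 6 N = 0, and E_A(f) <> 0 makes D invertible.  The
   identity is checked by computing with integer polynomials in a1, ..., a5. *)

(* Integer polynomials in a1, ..., a5 as lists of (coefficient, exponent) pairs and
   Laurent polynomials in t with such coefficients as lists of (exponent, coefficient)
   pairs.  Repetitions are allowed, so products are plain list comprehensions; only
   the tests [zl_eq0] and [zl_supp] normalise. *)
Definition mexp := (nat * nat * nat * nat * nat)%type.
Definition zpoly := seq (Z * mexp).
Definition zlaurent := seq (pt * zpoly).

Definition mexp0 : mexp := (0, 0, 0, 0, 0)%nat.
Definition mexp_add (e f : mexp) : mexp :=
  (e.1.1.1.1 + f.1.1.1.1, e.1.1.1.2 + f.1.1.1.2, e.1.1.2 + f.1.1.2,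
   e.1.2 + f.1.2, e.2 + f.2)%nat.

Definition zp_const (z : Z) : zpoly := [:: (z, mexp0)].
Definition zp_mul (p q : zpoly) : zpoly :=
  [seq (Z.mul x.1 y.1, mexp_add x.2 y.2) | x <- p, y <- q].
Fixpoint zp_ins (x : Z * mexp) (p : zpoly) : zpoly :=
  if p is y :: p' then
    if y.2 == x.2 then (Z.add y.1 x.1, y.2) :: p' else y :: zp_ins x p'
  else [:: x].
Definition zp_norm (p : zpoly) : zpoly :=
  [seq x <- foldr zp_ins [::] p | x.1 != 0%Z].

Definition padd (m n : pt) : pt := (m.1.1 + n.1.1, m.1.2 + n.1.2, m.2 + n.2).
(* [wt] indexed by [nat]: [wt i m] and [wtn i m] are convertible. *)
Definition wtn (k : nat) (m : pt) : int :=
  match k with 0 => 1 | 1 => m.1.1 | 2 => m.1.2 | _ => m.2 end.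

Definition zl_coef (L : zlaurent) (m : pt) : zpoly :=
  flatten [seq x.2 | x <- L & x.1 == m].
Definition zl_mul (L L' : zlaurent) : zlaurent :=
  [seq (padd y.1 x.1, zp_mul x.2 y.2) | x <- L, y <- L'].
Definition zl_scale (p : zpoly) (L : zlaurent) : zlaurent :=
  [seq (x.1, zp_mul p x.2) | x <- L].
Definition zl_theta (k : nat) (L : zlaurent) : zlaurent :=
  [seq (x.1, zp_mul (zp_const (Z_of_int (wtn k x.1))) x.2) | x <- L].
Definition zl_eq0 (L : zlaurent) : bool :=
  all (fun m => zp_norm (zl_coef L m) == [::]) (undup (map fst L)).
Definition zl_supp (L : zlaurent) (S : seq pt) : bool :=
  all (fun m => (zp_norm (zl_coef L m) == [::]) || (m \in S)) (undup (map fst L)).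

Lemma ptsub_eq (m n q : pt) : (ptsub m n == q) = (m == padd q n).
Proof.
case: m n q => [[m1 m2] m3] [[n1 n2] n3] [[q1 q2] q3].
by rewrite /ptsub /padd /= !xpair_eqE !subr_eq.
Qed.

Lemma ptsubK (m n : pt) : padd (ptsub m n) n = m.
Proof. by case: m n => [[m1 m2] m3] [[n1 n2] n3]; rewrite /padd /ptsub /= !subrK. Qed.

Section Evaluation.
Context {C : numClosedFieldType} (a : 'I_5 -> C).

Definition zC (z : Z) : C := (int_of_Z z)%:~R.

Lemma zCD x y : zC (Z.add x y) = zC x + zC y.
Proof. by rewrite /zC -intrD; congr (_%:~R); apply: (rmorphD int_of_Z). Qed.

Lemma zCM x y : zC (Z.mul x y) = zC x * zC y.
Proof. by rewrite /zC -intrM; congr (_%:~R); apply: (rmorphM int_of_Z). Qed.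

Definition evm (e : mexp) : C :=
  a (inord 0) ^+ e.1.1.1.1 * a (inord 1) ^+ e.1.1.1.2 * a (inord 2) ^+ e.1.1.2
  * a (inord 3) ^+ e.1.2 * a (inord 4) ^+ e.2.

Lemma evmD e f : evm (mexp_add e f) = evm e * evm f.
Proof.
case: e => [[[[e1 e2] e3] e4] e5]; case: f => [[[[f1 f2] f3] f4] f5].
by rewrite /evm /= !exprD; ring.
Qed.

Lemma evm0 : evm mexp0 = 1.
Proof. by rewrite /evm !expr0 !mulr1. Qed.

Definition evp (p : zpoly) : C := \sum_(x <- p) zC x.1 * evm x.2.

Lemma evp_const z : evp (zp_const z) = zC z.
Proof. by rewrite /evp big_seq1 evm0 mulr1. Qed.

Lemma evpM p q : evp (zp_mul p q) = evp p * evp q.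
Proof.
rewrite /evp big_allpairs_dep mulr_suml; apply: eq_bigr => x _.
by rewrite mulr_sumr; apply: eq_bigr => y _; rewrite zCM evmD; ring.
Qed.

Lemma evp_ins x p : evp (zp_ins x p) = zC x.1 * evm x.2 + evp p.
Proof.
rewrite /evp; elim: p => [|y p IH] /=; first by rewrite big_seq1 big_nil addr0.
case: eqP => [<-|_]; rewrite !big_cons /= ?IH ?zCD; ring.
Qed.

Lemma evp_norm p : evp (zp_norm p) = evp p.
Proof.
have -> : evp (zp_norm p) = evp (foldr zp_ins [::] p).
  rewrite /evp big_filter [RHS](bigID (fun x => x.1 != 0%Z)) /=.
  by rewrite [X in _ = _ + X]big1 ?addr0 // => x /negPn/eqP ->; rewrite mul0r.
elim: p => [|x p IH] //=.
by rewrite evp_ins IH /evp big_cons.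
Qed.

Definition evl (L : zlaurent) : lpoly C :=
  fun m => \sum_(x <- L) (if m == x.1 then evp x.2 else 0).

Lemma evl_coef L m : evl L m = evp (zl_coef L m).
Proof.
rewrite /evl /zl_coef /evp big_flatten big_map big_filter big_mkcond /=.
by apply: eq_bigr => x _; rewrite eq_sym.
Qed.

Lemma evl_out L m : m \notin map fst L -> evl L m = 0.
Proof.
move=> mL; rewrite /evl big_seq big1 // => x xL.
by case: eqP => // mx; move: mL; rewrite mx map_f.
Qed.

Lemma evl_norm0 L m : zp_norm (zl_coef L m) = [::] -> evl L m = 0.
Proof. by move=> E; rewrite evl_coef -evp_norm E /evp big_nil. Qed.

Lemma evl_eq0 L : zl_eq0 L -> forall m, evl L m = 0.
Proof.
move=> /allP L0 m; have [mL|/evl_out -> //] := boolP (m \in map fst L).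
by apply: evl_norm0; apply/eqP/L0; rewrite mem_undup.
Qed.

Lemma evl_supp L S m : zl_supp L S -> evl L m != 0 -> m \in S.
Proof.
move=> /allP LS; apply: contraR => mS; apply/eqP.
have [mL|/evl_out -> //] := boolP (m \in map fst L).
apply: evl_norm0.
have: m \in undup (map fst L) by rewrite mem_undup.
by move/LS/orP => [/eqP //|mS']; rewrite mS' in mS.
Qed.

Lemma evl_seq1 p c m : evl [:: (p, c)] m = if m == p then evp c else 0.
Proof. by rewrite /evl big_seq1. Qed.

Lemma evl_cat L L' m : evl (L ++ L') m = evl L m + evl L' m.
Proof. by rewrite /evl big_cat. Qed.

Lemma evl_flatten (Ls : seq zlaurent) m : evl (flatten Ls) m = \sum_(L <- Ls) evl L m.
Proof.
elim: Ls => [|L Ls IH]; first by rewrite big_nil /evl big_nil.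
by rewrite big_cons /= evl_cat IH.
Qed.

Lemma evl_scale p L m : evl (zl_scale p L) m = evp p * evl L m.
Proof.
rewrite /evl big_map mulr_sumr; apply: eq_bigr => x _ /=.
by case: ifP; rewrite ?mulr0 // evpM.
Qed.

Lemma evl_theta (i : 'I_4) L m : theta i (evl L) m = evl (zl_theta i L) m.
Proof.
rewrite /theta /evl big_map mulr_sumr; apply: eq_bigr => x _ /=.
case: eqP => [->|_]; rewrite ?mulr0 //.
by rewrite evpM evp_const /zC Z_of_intK.
Qed.

Definition box1 : seq pt :=
  flatten [seq flatten [seq [seq (i%:Z - 1%:Z, j%:Z - 1%:Z, l%:Z - 1%:Z)
    | l <- iota 0 3] | j <- iota 0 3] | i <- iota 0 3].

Lemma boxsum1E (F : pt -> C) : boxsum 1 F = \sum_(q <- box1) F q.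
Proof.
rewrite /boxsum /box1 big_flatten big_map.
under eq_bigr => i _ do rewrite big_flatten big_map.
under eq_bigr => i _ do under eq_bigr => j _ do rewrite big_map.
by rewrite !big_ord_recl !big_ord0 /= !big_cons !big_nil.
Qed.

Lemma lpmul1E (U : seq pt) (g h : lpoly C) m :
  uniq U -> {subset U <= box1} -> (forall q, q \notin U -> g q = 0) ->
  lpmul 1 g h m = \sum_(q <- U) g q * h (ptsub m q).
Proof.
move=> Uu Ubox gU; rewrite /lpmul boxsum1E (bigID (mem U)) /=.
rewrite [X in _ + X]big1 ?addr0 => [|q /gU ->]; last by rewrite mul0r.
rewrite -big_filter; apply/perm_big/uniq_perm => [||q]; rewrite ?filter_uniq //.
by rewrite mem_filter andb_idr // => /Ubox.
Qed.

Lemma lpmul_evl L L' m :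
  {subset map fst L <= box1} -> lpmul 1 (evl L) (evl L') m = evl (zl_mul L L') m.
Proof.
move=> Lbox; rewrite (@lpmul1E (undup (map fst L))) ?undup_uniq //; first last.
- by move=> q; rewrite mem_undup => /evl_out.
- by move=> q; rewrite mem_undup => /Lbox.
rewrite /evl /zl_mul big_allpairs_dep /=.
under eq_bigr do rewrite mulr_suml.
rewrite exchange_big /= [RHS]big_seq [LHS]big_seq; apply: eq_bigr => x xL.
rewrite (bigD1_seq x.1) ?undup_uniq ?mem_undup ?map_f //= eqxx.
rewrite [X in _ + X]big1 ?addr0 => [|q /negbTE ->]; last by rewrite mul0r.
rewrite mulr_sumr; apply: eq_bigr => y _; rewrite ptsub_eq.
by case: ifP; rewrite ?mulr0 // evpM.
Qed.

End Evaluation.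

(* [inordK] phrased with [\val], the form occurring in [vtx] and [wt]. *)
Lemma val_inord (n k : nat) : (k <= n)%nat -> \val (inord k : 'I_n.+1) = k.
Proof. exact: inordK. Qed.

Lemma big_ord5 (R : Type) (idx : R) (op : Monoid.law idx) (F : 'I_5 -> R) :
  \big[op/idx]_(i < 5) F i =
  op (F (inord 0)) (op (F (inord 1)) (op (F (inord 2)) (op (F (inord 3)) (op (F (inord 4)) idx)))).
Proof.
rewrite !big_ord_recl big_ord0.
by do 5?[congr (op (F _) _); first by apply/val_inj; rewrite /= inordK].
Qed.

Lemma in_kDelta_vtx (i : 'I_5) : in_kDelta 1 (vtx i).
Proof.
exists (fun j => (j == i)%:R); split=> [j|]; first by rewrite ler0n.
have sum_delta (F : 'I_5 -> rat) : \sum_j (j == i)%:R * F j = F i.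
  by rewrite (bigD1 i) //= eqxx mul1r big1 ?addr0 // => j /negbTE ->; rewrite mul0r.
rewrite !sum_delta; split=> //.
by rewrite -[RHS](sum_delta (fun=> 1)); apply: eq_bigr => j _; rewrite mulr1.
Qed.

Lemma in_kDelta_origin : in_kDelta 1 (0, 0, 0).
Proof.
exists (fun i : 'I_5 => if (val i < 3)%nat then 3^-1 else 0); split=> [i|].
  by case: ifP.
by rewrite !big_ord_recl !big_ord0 /=; do !split; field.
Qed.

Lemma in_kDelta_add j k x y :
  in_kDelta j x -> in_kDelta k y -> in_kDelta (j + k) (padd x y).
Proof.
move=> [l [l_ge0 [lsum [l1 [l2 l3]]]]] [l' [l'_ge0 [l'sum [l'1 [l'2 l'3]]]]].
exists (fun i => l i + l' i); split=> [i|]; first by rewrite addr_ge0.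
rewrite big_split /= lsum l'sum natrD /padd /= !intrD -l1 -l2 -l3 -l'1 -l'2 -l'3.
by rewrite -!big_split /=; do !split; apply: eq_bigr => i _; rewrite mulrDl.
Qed.

Definition fS : zlaurent :=
  [:: ((0, 0, 0), zp_const 1);
      ((1, 0, 0), [:: ((-1)%Z, (1, 0, 0, 0, 0)%nat)]);
      ((0, 1, 0), [:: ((-1)%Z, (0, 1, 0, 0, 0)%nat)]);
      ((-1, -1, 0), [:: ((-1)%Z, (0, 0, 1, 0, 0)%nat)]);
      ((0, 0, 1), [:: ((-1)%Z, (0, 0, 0, 1, 0)%nat)]);
      ((1, 1, -1), [:: ((-1)%Z, (0, 0, 0, 0, 1)%nat)])].

Definition suppf : seq pt := map fst fS.
Definition supp2 : seq pt := [seq padd x y | x <- suppf, y <- suppf].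
Definition supp3 : seq pt := [seq padd x y | x <- supp2, y <- suppf].

Lemma in_kDelta_suppf m : m \in suppf -> in_kDelta 1 m.
Proof.
rewrite !inE => /or4P[/eqP->|/eqP->|/eqP->|/or3P[/eqP->|/eqP->|/eqP->]].
- exact: in_kDelta_origin.
- exact: (in_kDelta_vtx (@Ordinal 5 0 isT)).
- exact: (in_kDelta_vtx (@Ordinal 5 1 isT)).
- exact: (in_kDelta_vtx (@Ordinal 5 2 isT)).
- exact: (in_kDelta_vtx (@Ordinal 5 3 isT)).
- exact: (in_kDelta_vtx (@Ordinal 5 4 isT)).
Qed.

Lemma in_kDelta_supp2 m : m \in supp2 -> in_kDelta 2 m.
Proof.
by case/allpairsP => [[x y] /= [xf yf ->]]; apply: (@in_kDelta_add 1 1);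
  apply: in_kDelta_suppf.
Qed.

Lemma in_kDelta_supp3 m : m \in supp3 -> in_kDelta 3 m.
Proof.
case/allpairsP => [[x y] /= [x2 yf ->]]; apply: (@in_kDelta_add 2 1).
  exact: in_kDelta_supp2.
exact: in_kDelta_suppf.
Qed.

Section SDelta.
Context {C : numClosedFieldType} (a : 'I_5 -> C).
Implicit Types (g h : lpoly C).

Lemma inS_add k g h : inS k g -> inS k h -> inS k (lpadd g h).
Proof.
move=> gk hk m; rewrite /lpadd; have [g0|/gk //] := eqVneq (g m) 0.
by rewrite g0 add0r => /hk.
Qed.

Lemma inS_scale k c g : inS k g -> inS k (lpscale c g).
Proof. by move=> gk m; rewrite /lpscale mulf_eq0 negb_or => /andP[_ /gk]. Qed.

Lemma eq_lpmul n g g' h h' : g =1 g' -> h =1 h' -> lpmul n g h =1 lpmul n g' h'.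
Proof.
move=> Eg Eh m; rewrite /lpmul /boxsum; apply: eq_bigr => i _; apply: eq_bigr => j _.
by apply: eq_bigr => l _; rewrite Eg Eh.
Qed.

Lemma inS_zero k : inS k (lpzero C).
Proof. by move=> m; rewrite eqxx. Qed.

Lemma inS_sum k (I : Type) (s : seq I) (G : I -> lpoly C) :
  (forall i, inS k (G i)) -> inS k (fun m => \sum_(i <- s) G i m).
Proof.
move=> Gk; elim: s => [|i s IH] m; first by rewrite big_nil eqxx.
by rewrite big_cons; apply: (inS_add (Gk i) IH).
Qed.

Lemma inS_evl k L S :
  (forall m, m \in S -> in_kDelta k m) -> zl_supp L S -> inS k (evl a L).
Proof. by move=> Sk LS m /(evl_supp LS) /Sk. Qed.

Lemma boxsum_neq0 n (F : pt -> C) : boxsum n F != 0 -> exists m, F m != 0.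
Proof.
move=> F0; pose G (x : 'I_(2 * n).+1 * 'I_(2 * n).+1 * 'I_(2 * n).+1) :=
  F (x.1.1%:Z - n%:Z, x.1.2%:Z - n%:Z, x.2%:Z - n%:Z).
have [x Gx|G0] := pickP (fun x => G x != 0).
  by exists (x.1.1%:Z - n%:Z, x.1.2%:Z - n%:Z, x.2%:Z - n%:Z).
move: F0; rewrite /boxsum big1 ?eqxx // => i _; rewrite big1 // => j _.
by rewrite big1 // => l _; apply/eqP; exact: (negbFE (G0 (i, j, l))).
Qed.

Lemma inS_lpmul n j k g h : inS j g -> inS k h -> inS (j + k) (lpmul n g h).
Proof.
move=> gj hk m /boxsum_neq0 [m1]; rewrite mulf_eq0 negb_or => /andP[/gj g1 /hk h1].
by rewrite -(ptsubK m m1) addnC; apply: in_kDelta_add.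
Qed.

Lemma fpoly_ev m : fpoly a m = evl a fS m.
Proof.
rewrite /fpoly big_ord5 /vtx !val_inord // /evl !big_cons big_nil /= !evp_const /evp !big_seq1.
have zC1 : zC 1%Z = 1 :> C by [].
have zCN1 : zC (-1)%Z = -1 :> C by [].
rewrite zC1 !zCN1 /evm /= !expr0 !expr1.
case: (m == (0,0,0)); case: (m == (1,0,0)); case: (m == (0,1,0));
case: (m == (-1,-1,0)); case: (m == (0,0,1)); case: (m == (1,1,-1)); ring.
Qed.

Lemma fpoly_out m : m \notin suppf -> fpoly a m = 0.
Proof. by rewrite fpoly_ev; apply: evl_out. Qed.

Lemma Fi_ev i m : Fi a i m = evl a (zl_theta i fS) m.
Proof. by rewrite -evl_theta /Fi /theta fpoly_ev. Qed.

Lemma inS_Fi i : inS 1 (Fi a i).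
Proof.
move=> m; rewrite /Fi /theta.
by have [/in_kDelta_suppf //|/fpoly_out ->] := boolP (m \in suppf); rewrite mulr0 eqxx.
Qed.

End SDelta.

Fixpoint detn (R : comNzRingType) (n : nat) (A : nat -> nat -> R) : R :=
  if n is n'.+1 then
    foldr (fun j d => (-1) ^+ j * A 0 j * detn n' (fun i k => A i.+1 (bump j k)) + d)
      0 (iota 0 n)
  else 1.

Lemma detnS (R : comNzRingType) n (A : nat -> nat -> R) :
  detn n.+1 A = \sum_(j < n.+1) (-1) ^+ j * A 0 j * detn n (fun i k => A i.+1 (bump j k)).
Proof.
pose F j := (-1) ^+ j * A 0 j * detn n (fun i k => A i.+1 (bump j k)).
have -> : detn n.+1 A = foldr (fun j d => F j + d) 0 (iota 0 n.+1) by [].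
rewrite -(big_mkord xpredT F) /index_iota subn0.
by elim: (iota 0 n.+1) => [|j s IH] /=; rewrite ?big_nil ?big_cons ?IH.
Qed.

Lemma det_mx_detn (R : comNzRingType) n (A : nat -> nat -> R) :
  \det (\matrix_(i < n, j < n) A i j) = detn n A.
Proof.
elim: n A => [|n IH] A; first by rewrite det_mx00.
rewrite (expand_det_row _ ord0) detnS; apply: eq_bigr => j _.
rewrite mxE /cofactor /= add0n -IH mulrCA mulrA; congr (_ * \det _).
by apply/matrixP => i k; rewrite !mxE.
Qed.

Lemma detn_intr (R : comNzRingType) n (A : nat -> nat -> int) :
  detn n (fun i j => (A i j)%:~R : R) = (detn n A)%:~R.
Proof.
elim: n A => [|n IH] A //.
by rewrite !detnS rmorph_sum; apply: eq_bigr => j _; rewrite !rmorphM /= intr_sign IH.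
Qed.

Definition quad := (pt * pt * pt * pt)%type.
Definition quads : seq quad :=
  [seq (q, p) | q <- [seq (q, p) | q <- [seq (p, p') | p <- suppf, p' <- suppf],
                                   p <- suppf], p <- suppf].
Definition quad_pts (q : quad) : seq pt := [:: q.1.1.1; q.1.1.2; q.1.2; q.2].
Definition quad_sum (q : quad) : pt :=
  padd (padd (padd (padd (0, 0, 0) q.2) q.1.2) q.1.1.2) q.1.1.1.
Definition quad_wt (q : quad) (i j : nat) : int := wtn j (nth (0, 0, 0) (quad_pts q) i).
Definition quad_coef (q : quad) : zpoly :=
  zp_mul (zp_const (Z_of_int
      (wtn 0 q.1.1.1 * (wtn 1 q.1.1.2 * (wtn 2 q.1.2 * (wtn 3 q.2 * detn 4 (quad_wt q)))))))
    (zp_mul (zl_coef fS q.1.1.1)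
      (zp_mul (zl_coef fS q.1.1.2) (zp_mul (zl_coef fS q.1.2) (zl_coef fS q.2)))).
Definition HS : zlaurent := [seq (quad_sum q, quad_coef q) | q <- quads].

Lemma suppf_box1 : {subset suppf <= box1}.
Proof. by apply/allP. Qed.

Lemma big_ord4 (R : Type) (idx : R) (op : Monoid.law idx) (F : 'I_4 -> R) :
  \big[op/idx]_(i < 4) F i =
  op (F (inord 0)) (op (F (inord 1)) (op (F (inord 2)) (op (F (inord 3)) idx))).
Proof.
rewrite !big_ord_recl big_ord0.
by do 4?[congr (op (F _) _); first by apply/val_inj; rewrite /= inordK].
Qed.

Lemma enum_ord4 : enum 'I_4 = [:: inord 0; inord 1; inord 2; inord 3].
Proof. by apply: (inj_map val_inj); rewrite val_enum_ord /= !inordK. Qed.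

Section Hessian.
Context {C : numClosedFieldType} (a : 'I_5 -> C).

Lemma lprod4 (g0 g1 g2 g3 : lpoly C) m :
  (forall q, q \notin suppf -> g0 q = 0) -> (forall q, q \notin suppf -> g1 q = 0) ->
  (forall q, q \notin suppf -> g2 q = 0) -> (forall q, q \notin suppf -> g3 q = 0) ->
  lprod [:: g0; g1; g2; g3] m =
  \sum_(q <- quads) (m == quad_sum q)%:R * (g0 q.1.1.1 * (g1 q.1.1.2 * (g2 q.1.2 * g3 q.2))).
Proof.
move=> g0f g1f g2f g3f; cbn [lprod].
have E g h m' := @lpmul1E C suppf g h m' isT suppf_box1.
rewrite (E _ _ _ g0f); under eq_bigr => q0 _ do rewrite (E _ _ _ g1f).
under eq_bigr => q0 _ do under eq_bigr => q1 _ do rewrite (E _ _ _ g2f).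
under eq_bigr => q0 _ do under eq_bigr => q1 _ do under eq_bigr => q2 _ do rewrite (E _ _ _ g3f).
rewrite /quads !big_allpairs; apply: eq_bigr => q0 _; rewrite mulr_sumr.
apply: eq_bigr => q1 _; rewrite !mulr_sumr; apply: eq_bigr => q2 _.
rewrite !mulr_sumr; apply: eq_bigr => q3 _.
rewrite /mono /quad_sum /= !ptsub_eq.
by case: ifP => _; rewrite ?mulr1 ?mulr0 ?mul1r ?mul0r.
Qed.

Lemma det_Mf q :
  let p i := nth (0, 0, 0) (quad_pts q) i in
  \det (\matrix_(i, j) Mf a i j (p i)) =
  (\prod_(i < 4) ((wt i (p i))%:~R * fpoly a (p i))) * (detn 4 (quad_wt q))%:~R.
Proof.
move=> p; have -> : \matrix_(i, j) Mf a i j (p i) =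
    diag_mx (\row_i ((wt i (p i))%:~R * fpoly a (p i))) *m
    \matrix_(i < 4, j < 4) ((quad_wt q i j)%:~R : C).
  by rewrite mul_diag_mx; apply/matrixP => i j; rewrite !mxE /Mf /theta /quad_wt; ring.
rewrite det_mulmx det_diag (@det_mx_detn C 4 (fun i j => (quad_wt q i j)%:~R)) detn_intr.
congr (_ * _).
by apply: eq_bigr => i _; rewrite mxE.
Qed.

Lemma Hprime_ev m : Hprime a m = evl a HS m.
Proof.
rewrite /Hprime /detlp enum_ord4.
have Mf_out i j q : q \notin suppf -> Mf a i j q = 0.
  by move=> qf; rewrite /Mf /theta fpoly_out // !mulr0.
under eq_bigr do rewrite (lprod4 _ (Mf_out _ _) (Mf_out _ _) (Mf_out _ _) (Mf_out _ _)).
under eq_bigr do rewrite mulr_sumr.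
rewrite exchange_big /evl /HS big_map /=; apply: eq_bigr => q _.
under eq_bigr do rewrite mulrCA.
rewrite -mulr_sumr; case: eqP => _; rewrite ?mul0r // mul1r.
have -> : \sum_(s : 'S_4) (-1) ^+ s * (Mf a (inord 0) (s (inord 0)) q.1.1.1 *
      (Mf a (inord 1) (s (inord 1)) q.1.1.2 *
       (Mf a (inord 2) (s (inord 2)) q.1.2 * Mf a (inord 3) (s (inord 3)) q.2)))
   = \det (\matrix_(i, j) Mf a i j (nth (0, 0, 0) (quad_pts q) i)).
  rewrite /determinant; apply: eq_bigr => s _; congr (_ * _).
  by rewrite big_ord4 !mxE !inordK //= mulr1.
rewrite det_Mf /quad_coef !evpM evp_const /zC Z_of_intK -!evl_coef -!fpoly_ev !intrM.
(* the [set] keeps [/=] from unfolding [detn] *)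
set d := detn 4 _; rewrite big_ord4 /= /wt !val_inord //.
ring.
Qed.
End Hessian.

(* Each entry of M_f lies in S^1, so a priori only H'_f \in S^4; degree 3 is read
   off the expansion. *)
Lemma Hprime_inS {C : numClosedFieldType} (a : 'I_5 -> C) : inS 3 (Hprime a).
Proof.
have HS_supp : zl_supp HS supp3 by vm_compute.
by move=> m; rewrite Hprime_ev; apply: (inS_evl in_kDelta_supp3 HS_supp).
Qed.

Section ToricResidue.
Context {C : numClosedFieldType} (a : 'I_5 -> C) (Res : lpoly C -> C).
Hypothesis ResP : is_toric_residue a Res.

Lemma Res_add g h : inS 3 g -> inS 3 h -> Res (lpadd g h) = Res g + Res h.
Proof.
case: ResP => Rext Rlin _ _ g3 h3; rewrite -[Res g]mul1r -Rlin //.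
by apply: Rext => m; rewrite /lpadd /lpscale mul1r.
Qed.

Lemma Res_zero : Res (lpzero C) = 0.
Proof.
have [Rext _ _ _] := ResP.
have := Res_add (@inS_zero C 3) (@inS_zero C 3).
rewrite (Rext _ (lpzero C)) => [E|m]; last by rewrite /lpadd addr0.
by apply: (addrI (Res (lpzero C))); rewrite addr0 -E.
Qed.

Lemma Res_scale c g : inS 3 g -> Res (lpscale c g) = c * Res g.
Proof.
have [Rext Rlin _ _] := ResP; move=> g3.
rewrite -[RHS]addr0 -Res_zero -(Rlin _ _ _ g3 (@inS_zero C 3)).
by apply: Rext => m; rewrite /lpadd /lpzero addr0.
Qed.

Lemma Res_sum (I : Type) (s : seq I) (G : I -> lpoly C) :
  (forall i, inS 3 (G i)) -> Res (fun m => \sum_(i <- s) G i m) = \sum_(i <- s) Res (G i).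
Proof.
move=> G3; have [Rext _ _ _] := ResP; elim: s => [|i s IH].
  by rewrite big_nil -[RHS]Res_zero; apply: Rext => m; rewrite big_nil.
rewrite big_cons -IH -Res_add //; last exact: inS_sum.
by apply: Rext => m; rewrite big_cons.
Qed.

Lemma Res_ideal (hs : 'I_4 -> lpoly C) :
  (forall i, inS 2 (hs i)) -> Res (fun m => \sum_(i < 4) lpmul 1 (Fi a i) (hs i) m) = 0.
Proof.
have [_ _ RF _] := ResP; move=> hs2.
rewrite Res_sum => [|i]; last exact: (inS_lpmul (@inS_Fi _ a i) (hs2 i)).
by rewrite big1 // => i _; apply: RF.
Qed.

Lemma Res_certificate g (hs : 'I_4 -> lpoly C) (d e : C) :
  inS 3 g -> (forall i, inS 2 (hs i)) ->
  (forall m, d * g m + e * Hprime a m = \sum_(i < 4) lpmul 1 (Fi a i) (hs i) m) ->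
  d * Res g + e * VolDelta%:R = 0.
Proof.
have [Rext _ _ RH] := ResP; move=> g3 hs2 E.
have H3 := Hprime_inS (a := a).
rewrite -RH -(Res_scale d g3) -(Res_scale e H3) -Res_add; try exact: inS_scale.
by rewrite -(Res_ideal hs2); apply: Rext => m; apply: E.
Qed.
End ToricResidue.


Section Factors.
Context {C : numClosedFieldType} (a : 'I_5 -> C).
Local Notation a1 := (a (inord 0)).
Local Notation a2 := (a (inord 1)).
Local Notation a3 := (a (inord 2)).
Local Notation a4 := (a (inord 3)).
Local Notation a5 := (a (inord 4)).

(* The discriminant of the quadrilateral facet conv{v1, v2, v4, v5}, v1 + v2 = v4 + v5. *)
Definition dface : C := a1 * a2 - a4 * a5.
Definition dcore : C := 1 - 54 * a3 * (a1 * a2 + a4 * a5) + 729 * a3 ^+ 2 * dface ^+ 2.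
Definition ncore : C := 1 - 27 * a1 * a2 * a3 - 81 * a3 * a4 * a5.

Lemma EA_factor : EA a = a1 ^+ 3 * a2 ^+ 3 * a3 ^+ 4 * a4 ^+ 3 * a5 ^+ 3 * dface * dcore.
Proof. by rewrite /EA /dcore /dface; ring. Qed.

Lemma Rnum_factor : Rnum a = a1 ^+ 4 * a2 ^+ 4 * a3 ^+ 4 * a4 ^+ 3 * a5 ^+ 3 * ncore.
Proof. by rewrite /Rnum /ncore; ring. Qed.

Lemma EA_neq0_factors : EA a != 0 -> [/\ a5 != 0, dface != 0 & dcore != 0].
Proof.
by move=> EA0; split; apply: contraNneq EA0 => z; apply/eqP; rewrite EA_factor z; ring.
Qed.

End Factors.

(* The cofactors h_0, ..., h_3 of the identity in the header: witnesses, validated by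
   [certificate_eq0]. *)
Definition hS0 : zlaurent :=
  [:: (((-2), (-2), 0),
        [:: (10%Z, (1, 1, 2, 1, 2)); ((-486)%Z, (1, 1, 3, 2, 3)); (2916%Z, (1, 1, 4, 3, 4));
            ((-594)%Z, (2, 2, 3, 1, 2)); ((-5832)%Z, (2, 2, 4, 2, 3));
            (2916%Z, (3, 3, 4, 1, 2))]%nat);
      (((-1), (-1), 0),
        [:: ((-6)%Z, (1, 1, 1, 1, 2)); (324%Z, (1, 1, 2, 2, 3)); ((-3402)%Z, (1, 1, 3, 3, 4));
            (1%Z, (2, 2, 1, 0, 1)); (243%Z, (2, 2, 2, 1, 2)); (6804%Z, (2, 2, 3, 2, 3));
            ((-27)%Z, (3, 3, 2, 0, 1)); ((-3402)%Z, (3, 3, 3, 1, 2))]%nat);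
      (((-1), (-1), 1),
        [:: ((-10)%Z, (1, 1, 1, 2, 2)); (540%Z, (1, 1, 2, 3, 3)); ((-4374)%Z, (1, 1, 3, 4, 4));
            (6%Z, (2, 2, 1, 1, 1)); (162%Z, (2, 2, 2, 2, 2)); (11664%Z, (2, 2, 3, 3, 3));
            ((-1)%Z, (3, 3, 1, 0, 0)); ((-189)%Z, (3, 3, 2, 1, 1));
            ((-10206)%Z, (3, 3, 3, 2, 2)); (27%Z, (4, 4, 2, 0, 0)); (2916%Z, (4, 4, 3, 1, 1))]%nat);
      ((0, (-1), 0),
        [:: ((-16)%Z, (2, 1, 1, 1, 2)); (810%Z, (2, 1, 2, 2, 3)); ((-4374)%Z, (2, 1, 3, 3, 4));
            (1%Z, (3, 2, 1, 0, 1)); (837%Z, (3, 2, 2, 1, 2)); (8748%Z, (3, 2, 3, 2, 3));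
            ((-27)%Z, (4, 3, 2, 0, 1)); ((-4374)%Z, (4, 3, 3, 1, 2))]%nat);
      ((0, 0, 0),
        [:: (6%Z, (1, 1, 1, 2, 3)); ((-162)%Z, (1, 1, 2, 3, 4)); ((-6)%Z, (2, 2, 1, 1, 2));
            ((-324)%Z, (2, 2, 2, 2, 3)); (486%Z, (3, 3, 2, 1, 2))]%nat);
      ((0, 0, 1),
        [:: (6%Z, (1, 1, 0, 2, 2)); ((-306)%Z, (1, 1, 1, 3, 3)); (2916%Z, (1, 1, 2, 4, 4));
            ((-1)%Z, (2, 2, 0, 1, 1)); ((-279)%Z, (2, 2, 1, 2, 2));
            ((-6318)%Z, (2, 2, 2, 3, 3)); (45%Z, (3, 3, 1, 1, 1)); (3888%Z, (3, 3, 2, 2, 2));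
            ((-486)%Z, (4, 4, 2, 1, 1))]%nat);
      ((1, 0, 0),
        [:: (6%Z, (2, 1, 0, 1, 2)); ((-324)%Z, (2, 1, 1, 2, 3)); (4374%Z, (2, 1, 2, 3, 4));
            ((-1)%Z, (3, 2, 0, 0, 1)); ((-243)%Z, (3, 2, 1, 1, 2));
            ((-8748)%Z, (3, 2, 2, 2, 3)); (27%Z, (4, 3, 1, 0, 1)); (4374%Z, (4, 3, 2, 1, 2))]%nat);
      ((1, 0, 1),
        [:: (6%Z, (2, 1, 0, 2, 2)); ((-324)%Z, (2, 1, 1, 3, 3)); (4374%Z, (2, 1, 2, 4, 4));
            ((-7)%Z, (3, 2, 0, 1, 1)); (81%Z, (3, 2, 1, 2, 2)); ((-13122)%Z, (3, 2, 2, 3, 3));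
            (1%Z, (4, 3, 0, 0, 0)); (270%Z, (4, 3, 1, 1, 1)); (13122%Z, (4, 3, 2, 2, 2));
            ((-27)%Z, (5, 4, 1, 0, 0)); ((-4374)%Z, (5, 4, 2, 1, 1))]%nat);
      ((1, 1, 0),
        [:: ((-1)%Z, (2, 2, 0, 1, 2)); (81%Z, (2, 2, 1, 2, 3)); (1%Z, (3, 3, 0, 0, 1));
            ((-54)%Z, (3, 3, 1, 1, 2)); ((-27)%Z, (4, 4, 1, 0, 1))]%nat);
      ((2, 0, 0),
        [:: (1%Z, (3, 1, 0, 1, 2)); ((-81)%Z, (3, 1, 1, 2, 3)); ((-1)%Z, (4, 2, 0, 0, 1));
            (54%Z, (4, 2, 1, 1, 2)); (27%Z, (5, 3, 1, 0, 1))]%nat)].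

Definition hS1 : zlaurent :=
  [:: (((-2), (-2), 0),
        [:: (21%Z, (1, 1, 2, 1, 2)); ((-1053)%Z, (1, 1, 3, 2, 3)); (5832%Z, (1, 1, 4, 3, 4));
            ((-1)%Z, (2, 2, 2, 0, 1)); ((-1134)%Z, (2, 2, 3, 1, 2));
            ((-11664)%Z, (2, 2, 4, 2, 3)); (27%Z, (3, 3, 3, 0, 1)); (5832%Z, (3, 3, 4, 1, 2))]%nat);
      (((-1), (-1), 0),
        [:: ((-22)%Z, (1, 1, 1, 1, 2)); (1134%Z, (1, 1, 2, 2, 3));
            ((-9720)%Z, (1, 1, 3, 3, 4)); (2%Z, (2, 2, 1, 0, 1)); (1080%Z, (2, 2, 2, 1, 2));
            (19440%Z, (2, 2, 3, 2, 3)); ((-54)%Z, (3, 3, 2, 0, 1));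
            ((-9720)%Z, (3, 3, 3, 1, 2))]%nat);
      (((-1), (-1), 1),
        [:: (12%Z, (1, 1, 1, 2, 2)); ((-540)%Z, (1, 1, 2, 3, 3)); (9%Z, (2, 2, 1, 1, 1));
            ((-1269)%Z, (2, 2, 2, 2, 2)); (5832%Z, (2, 2, 3, 3, 3)); ((-1)%Z, (3, 3, 1, 0, 0));
            ((-378)%Z, (3, 3, 2, 1, 1)); ((-11664)%Z, (3, 3, 3, 2, 2));
            (27%Z, (4, 4, 2, 0, 0)); (5832%Z, (4, 4, 3, 1, 1))]%nat);
      (((-1), 0, 0),
        [:: ((-1)%Z, (1, 2, 1, 1, 2)); (81%Z, (1, 2, 2, 2, 3)); (1%Z, (2, 3, 1, 0, 1));
            ((-54)%Z, (2, 3, 2, 1, 2)); ((-27)%Z, (3, 4, 2, 0, 1))]%nat);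
      ((0, (-1), 0),
        [:: (14%Z, (2, 1, 1, 1, 2)); ((-648)%Z, (2, 1, 2, 2, 3)); (4374%Z, (2, 1, 3, 3, 4));
            (1%Z, (3, 2, 1, 0, 1)); ((-945)%Z, (3, 2, 2, 1, 2)); ((-8748)%Z, (3, 2, 3, 2, 3));
            ((-27)%Z, (4, 3, 2, 0, 1)); (4374%Z, (4, 3, 3, 1, 2))]%nat);
      ((0, 0, 0),
        [:: (6%Z, (1, 1, 0, 1, 2)); ((-321)%Z, (1, 1, 1, 2, 3)); (3807%Z, (1, 1, 2, 3, 4));
            ((-1)%Z, (2, 2, 0, 0, 1)); ((-246)%Z, (2, 2, 1, 1, 2));
            ((-7938)%Z, (2, 2, 2, 2, 3)); (27%Z, (3, 3, 1, 0, 1)); (4131%Z, (3, 3, 2, 1, 2))]%nat);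
      ((0, 0, 1),
        [:: ((-6)%Z, (1, 1, 0, 2, 2)); (306%Z, (1, 1, 1, 3, 3)); ((-2916)%Z, (1, 1, 2, 4, 4));
            ((-5)%Z, (2, 2, 0, 1, 1)); (603%Z, (2, 2, 1, 2, 2)); (1944%Z, (2, 2, 2, 3, 3));
            (1%Z, (3, 3, 0, 0, 0)); (198%Z, (3, 3, 1, 1, 1)); (4860%Z, (3, 3, 2, 2, 2));
            ((-27)%Z, (4, 4, 1, 0, 0)); ((-3888)%Z, (4, 4, 2, 1, 1))]%nat);
      ((0, 0, 2),
        [:: ((-6)%Z, (1, 1, 0, 3, 2)); (324%Z, (1, 1, 1, 4, 3)); ((-4374)%Z, (1, 1, 2, 5, 4));
            (7%Z, (2, 2, 0, 2, 1)); ((-81)%Z, (2, 2, 1, 3, 2)); (13122%Z, (2, 2, 2, 4, 3));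
            ((-1)%Z, (3, 3, 0, 1, 0)); ((-270)%Z, (3, 3, 1, 2, 1));
            ((-13122)%Z, (3, 3, 2, 3, 2)); (27%Z, (4, 4, 1, 1, 0)); (4374%Z, (4, 4, 2, 2, 1))]%nat);
      ((0, 1, 1),
        [:: ((-1)%Z, (1, 2, 0, 2, 2)); (81%Z, (1, 2, 1, 3, 3)); (2%Z, (2, 3, 0, 1, 1));
            ((-135)%Z, (2, 3, 1, 2, 2)); ((-1)%Z, (3, 4, 0, 0, 0)); (27%Z, (3, 4, 1, 1, 1));
            (27%Z, (4, 5, 1, 0, 0))]%nat);
      ((1, 0, 0),
        [:: ((-5)%Z, (2, 1, 0, 1, 2)); (243%Z, (2, 1, 1, 2, 3)); ((-4374)%Z, (2, 1, 2, 3, 4));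
            (297%Z, (3, 2, 1, 1, 2)); (8748%Z, (3, 2, 2, 2, 3)); ((-4374)%Z, (4, 3, 2, 1, 2))]%nat);
      ((1, 0, 1),
        [:: ((-7)%Z, (2, 1, 0, 2, 2)); (405%Z, (2, 1, 1, 3, 3)); ((-4374)%Z, (2, 1, 2, 4, 4));
            (8%Z, (3, 2, 0, 1, 1)); ((-135)%Z, (3, 2, 1, 2, 2)); (13122%Z, (3, 2, 2, 3, 3));
            ((-1)%Z, (4, 3, 0, 0, 0)); ((-297)%Z, (4, 3, 1, 1, 1));
            ((-13122)%Z, (4, 3, 2, 2, 2)); (27%Z, (5, 4, 1, 0, 0)); (4374%Z, (5, 4, 2, 1, 1))]%nat);
      ((2, 0, 0),
        [:: ((-1)%Z, (3, 1, 0, 1, 2)); (81%Z, (3, 1, 1, 2, 3)); (1%Z, (4, 2, 0, 0, 1));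
            ((-54)%Z, (4, 2, 1, 1, 2)); ((-27)%Z, (5, 3, 1, 0, 1))]%nat)].

Definition hS2 : zlaurent :=
  [:: (((-2), (-2), 0),
        [:: ((-11)%Z, (1, 1, 2, 1, 2)); (567%Z, (1, 1, 3, 2, 3)); ((-2916)%Z, (1, 1, 4, 3, 4));
            (1%Z, (2, 2, 2, 0, 1)); (540%Z, (2, 2, 3, 1, 2)); (5832%Z, (2, 2, 4, 2, 3));
            ((-27)%Z, (3, 3, 3, 0, 1)); ((-2916)%Z, (3, 3, 4, 1, 2))]%nat);
      (((-1), (-1), 0),
        [:: (6%Z, (1, 1, 1, 1, 2)); ((-324)%Z, (1, 1, 2, 2, 3)); (3402%Z, (1, 1, 3, 3, 4));
            ((-1)%Z, (2, 2, 1, 0, 1)); ((-243)%Z, (2, 2, 2, 1, 2));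
            ((-6804)%Z, (2, 2, 3, 2, 3)); (27%Z, (3, 3, 2, 0, 1)); (3402%Z, (3, 3, 3, 1, 2))]%nat);
      (((-1), (-1), 1),
        [:: (8%Z, (1, 1, 1, 2, 2)); ((-378)%Z, (1, 1, 2, 3, 3)); (4374%Z, (1, 1, 3, 4, 4));
            ((-3)%Z, (2, 2, 1, 1, 1)); ((-351)%Z, (2, 2, 2, 2, 2));
            ((-11664)%Z, (2, 2, 3, 3, 3)); (189%Z, (3, 3, 2, 1, 1));
            (10206%Z, (3, 3, 3, 2, 2)); ((-2916)%Z, (4, 4, 3, 1, 1))]%nat);
      ((0, (-1), 0),
        [:: (1%Z, (2, 1, 1, 1, 2)); ((-81)%Z, (2, 1, 2, 2, 3)); ((-1)%Z, (3, 2, 1, 0, 1));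
            (54%Z, (3, 2, 2, 1, 2)); (27%Z, (4, 3, 2, 0, 1))]%nat);
      ((0, 0, 0),
        [:: (3%Z, (1, 1, 1, 2, 3)); ((-567)%Z, (1, 1, 2, 3, 4)); ((-3)%Z, (2, 2, 1, 1, 2));
            (810%Z, (2, 2, 2, 2, 3)); ((-243)%Z, (3, 3, 2, 1, 2))]%nat);
      ((0, 0, 1),
        [:: ((-6)%Z, (1, 1, 0, 2, 2)); (306%Z, (1, 1, 1, 3, 3)); ((-2916)%Z, (1, 1, 2, 4, 4));
            (1%Z, (2, 2, 0, 1, 1)); (279%Z, (2, 2, 1, 2, 2)); (6318%Z, (2, 2, 2, 3, 3));
            ((-45)%Z, (3, 3, 1, 1, 1)); ((-3888)%Z, (3, 3, 2, 2, 2));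
            (486%Z, (4, 4, 2, 1, 1))]%nat);
      ((1, 0, 0),
        [:: ((-1)%Z, (2, 1, 0, 1, 2)); (81%Z, (2, 1, 1, 2, 3)); (1%Z, (3, 2, 0, 0, 1));
            ((-54)%Z, (3, 2, 1, 1, 2)); ((-27)%Z, (4, 3, 1, 0, 1))]%nat)].

Definition hS3 : zlaurent :=
  [:: (((-2), (-2), 0),
        [:: (20%Z, (1, 1, 2, 1, 2)); ((-972)%Z, (1, 1, 3, 2, 3)); (5832%Z, (1, 1, 4, 3, 4));
            ((-1188)%Z, (2, 2, 3, 1, 2)); ((-11664)%Z, (2, 2, 4, 2, 3));
            (5832%Z, (3, 3, 4, 1, 2))]%nat);
      (((-1), (-1), 0),
        [:: ((-22)%Z, (1, 1, 1, 1, 2)); (1134%Z, (1, 1, 2, 2, 3));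
            ((-9720)%Z, (1, 1, 3, 3, 4)); (2%Z, (2, 2, 1, 0, 1)); (1080%Z, (2, 2, 2, 1, 2));
            (19440%Z, (2, 2, 3, 2, 3)); ((-54)%Z, (3, 3, 2, 0, 1));
            ((-9720)%Z, (3, 3, 3, 1, 2))]%nat);
      (((-1), (-1), 1),
        [:: (4%Z, (1, 1, 1, 2, 2)); ((-216)%Z, (1, 1, 2, 3, 3)); (1%Z, (2, 2, 1, 1, 1));
            ((-243)%Z, (2, 2, 2, 2, 2)); (1458%Z, (2, 2, 3, 3, 3)); ((-81)%Z, (3, 3, 2, 1, 1));
            ((-2916)%Z, (3, 3, 3, 2, 2)); (1458%Z, (4, 4, 3, 1, 1))]%nat);
      ((0, 0, 0),
        [:: (6%Z, (1, 1, 0, 1, 2)); ((-312)%Z, (1, 1, 1, 2, 3)); (3078%Z, (1, 1, 2, 3, 4));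
            ((-1)%Z, (2, 2, 0, 0, 1)); ((-264)%Z, (2, 2, 1, 1, 2));
            ((-6723)%Z, (2, 2, 2, 2, 3)); (36%Z, (3, 3, 1, 0, 1)); (3888%Z, (3, 3, 2, 1, 2));
            ((-243)%Z, (4, 4, 2, 0, 1))]%nat);
      ((0, 0, 1),
        [:: ((-6)%Z, (1, 1, 0, 2, 2)); (306%Z, (1, 1, 1, 3, 3)); ((-2916)%Z, (1, 1, 2, 4, 4));
            (1%Z, (2, 2, 0, 1, 1)); (279%Z, (2, 2, 1, 2, 2)); (6318%Z, (2, 2, 2, 3, 3));
            ((-45)%Z, (3, 3, 1, 1, 1)); ((-3888)%Z, (3, 3, 2, 2, 2));
            (486%Z, (4, 4, 2, 1, 1))]%nat)].

Definition hS (k : nat) : zlaurent := nth [::] [:: hS0; hS1; hS2; hS3] k.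

Definition dfaceS : zpoly := [:: (1%Z, (1, 1, 0, 0, 0)); ((-1)%Z, (0, 0, 0, 1, 1))]%nat.
Definition dcoreS : zpoly :=
  [:: (1%Z, (0, 0, 0, 0, 0)); ((-54)%Z, (1, 1, 1, 0, 0)); ((-54)%Z, (0, 0, 1, 1, 1));
      (729%Z, (2, 2, 2, 0, 0)); ((-1458)%Z, (1, 1, 2, 1, 1)); (729%Z, (0, 0, 2, 2, 2))]%nat.
Definition ncoreS : zpoly :=
  [:: (1%Z, (0, 0, 0, 0, 0)); ((-27)%Z, (1, 1, 1, 0, 0)); ((-81)%Z, (0, 0, 1, 1, 1))]%nat.
Definition DS : zpoly :=
  zp_mul (zp_const 6) (zp_mul [:: (1%Z, (0, 0, 0, 0, 1)%nat)]
    (zp_mul dfaceS (zp_mul dfaceS dcoreS))).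
Definition NS : zpoly := zp_mul dfaceS (zp_mul [:: (1%Z, (1, 1, 0, 0, 1)%nat)] ncoreS).
Definition certificate : zlaurent :=
  [:: ((1, 1, 1), zp_mul DS [:: (1%Z, (1, 1, 0, 1, 0)%nat)])] ++ zl_scale NS HS ++
  zl_scale (zp_const (-1)) (flatten [seq zl_mul (zl_theta k fS) (hS k) | k <- iota 0 4]).

Lemma certificate_eq0 : zl_eq0 certificate.
Proof. by vm_compute. Qed.

Lemma inS_hS {C : numClosedFieldType} (a : 'I_5 -> C) (i : 'I_4) : inS 2 (evl a (hS i)).
Proof.
have hS_supp : all (fun k => zl_supp (hS k) supp2) (iota 0 4) by vm_compute.
apply: (inS_evl in_kDelta_supp2); apply: (allP hS_supp).
by rewrite mem_iota add0n ltn_ord.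
Qed.

Section Certificate.
Context {C : numClosedFieldType} (a : 'I_5 -> C).
Local Notation a1 := (a (inord 0)).
Local Notation a2 := (a (inord 1)).
Local Notation a3 := (a (inord 2)).
Local Notation a4 := (a (inord 3)).
Local Notation a5 := (a (inord 4)).

Lemma DS_ev : evp a DS = 6 * a5 * dface a ^+ 2 * dcore a.
Proof.
rewrite /DS !evpM evp_const /dfaceS /dcoreS /evp !big_cons !big_nil /zC.
vm_compute int_of_Z; rewrite /evm /=.
by rewrite /dcore /dface; ring.
Qed.

Lemma NS_ev : evp a NS = dface a * (a1 * a2 * a5) * ncore a.
Proof.
rewrite /NS !evpM /dfaceS /ncoreS /evp !big_cons !big_nil /zC.
vm_compute int_of_Z; rewrite /evm /=.
by rewrite /ncore /dface; ring.
Qed.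

Lemma certificate_ev m :
  evp a DS * mono (1, 1, 1) (a1 * a2 * a4) m + evp a NS * Hprime a m =
  \sum_(i < 4) lpmul 1 (Fi a i) (evl a (hS i)) m.
Proof.
have Fh (i : 'I_4) : lpmul 1 (Fi a i) (evl a (hS i)) m =
    evl a (zl_mul (zl_theta i fS) (hS i)) m.
  by rewrite (eq_lpmul _ (Fi_ev a i) (frefl _)) lpmul_evl //; apply: suppf_box1.
under eq_bigr do rewrite Fh.
rewrite -(big_mkord xpredT (fun k => evl a (zl_mul (zl_theta k fS) (hS k)) m)).
have := evl_eq0 a certificate_eq0 m.
rewrite /certificate !evl_cat !evl_scale evl_flatten big_map evp_const Hprime_ev.
rewrite evl_seq1 evpM /index_iota subn0 /mono (_ : zC (-1) = -1) //.
have -> : evp a [:: (1%Z, (1, 1, 0, 1, 0)%nat)] = a1 * a2 * a4.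
  by rewrite /evp big_seq1 /evm /= !expr0 !expr1 mul1r !mulr1.
by case: eqP => _ H; apply/eqP; rewrite -subr_eq0; apply/eqP; rewrite -[X in _ = X]H; ring.
Qed.
End Certificate.

Unset Implicit Arguments.

Theorem mainTheorem6 (C : numClosedFieldType) (a : 'I_5 -> C)
    (Res : lpoly C -> C) :
  Delta_regular a -> EA a != 0 -> is_toric_residue a Res ->
  - Res (mono (1, 1, 1) (a (inord 0) * a (inord 1) * a (inord 3)))
    = Rnum a / EA a.
Proof.
move=> _ EA_neq0 ResP; set g := mono _ _.
have g3 : inS 3 g.
  move=> m; rewrite /g /mono; case: (m =P (1, 1, 1)) => [-> _|_]; last by rewrite eqxx.
  exact: in_kDelta_supp3.
have := Res_certificate ResP g3 (@inS_hS C a) (certificate_ev a).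
rewrite DS_ev NS_ev => /eqP; rewrite addr_eq0 => /eqP ResE.
have [a5_0 dface0 dcore0] := EA_neq0_factors EA_neq0.
have D0 : 6 * a (inord 4) * dface a ^+ 2 * dcore a != 0.
  by rewrite !mulf_neq0 ?expf_neq0 ?pnatr_eq0.
rewrite -[Res g](mulKf D0) ResE mulrN opprK mulrC; apply/eqP.
by rewrite eqr_div // Rnum_factor EA_factor; apply/eqP; rewrite /VolDelta; ring.
Qed.
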